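(* Let $x_1,\dots,x_T\in\mathbb{R}^d$ and $r>0$. Let $A_0=I$, $A_t=A_{t-1}+\frac1rx_tx_t^\top$ for $t\ge1$, and let $D_t$ be the diagonal matrix with the same diagonal as $A_t$. Then $$\sum_{t=1}^Tx_t^\top D_t^{-1}x_t\le r\sum_{i=1}^d\ln\left(\frac1r\sum_{t=1}^Tx_{t,i}^2+1\right).$$ *)

From mathcomp Require Import all_boot all_order all_algebra.
From mathcomp Require Import all_classical all_reals all_analysis.
Set Implicit Arguments. Unset Strict Implicit. Unset Printing Implicit Defensive.
Import Order.TTheory GRing.Theory Num.Theory.
Local Open Scope ring_scope.

Fixpoint Amat (R : realType) (d : nat) (r : R) (x : nat -> 'cV[R]_d) (t : nat)
  : 'M[R]_d :=
  match t with
  | 0 => 1%:M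
  | t'.+1 => Amat r x t' + r^-1 *: (x t'.+1 *m (x t'.+1)^T)
  end.

Definition Dmat (R : realType) (d : nat) (r : R) (x : nat -> 'cV[R]_d) (t : nat)
  : 'M[R]_d := diag_mx (\row_i Amat r x t i i).

From mathcomp Require Import all_boot all_order all_algebra.
From mathcomp Require Import all_classical all_reals all_analysis.
From mathcomp Require Import lra.
Import Order.TTheory GRing.Theory Num.Theory.
Local Open Scope ring_scope.

(* Only the diagonal of [A_t] enters [D_t]; its [i]-th entry is
   [a_i(t) = 1 + (1/r) \sum_{s <= t} x_{s,i}^2], so the left-hand side splits
   over coordinates into [\sum_t r (a_i(t) - a_i(t-1)) / a_i(t)].  Each term is
   at most [r (ln a_i(t) - ln a_i(t-1))] because [1 - u <= -ln u], and the sum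
   telescopes to [r ln a_i(T)], since [a_i(0) = 1]. *)

Lemma invmx_diag (R : comUnitRingType) n (v : 'rV[R]_n) :
  (forall i, v 0 i \is a GRing.unit) ->
  invmx (diag_mx v) = diag_mx (\row_i (v 0 i)^-1).
Proof.
move=> v_unit; set W := diag_mx (\row_i _).
have vW : diag_mx v *m W = 1%:M.
  by apply/matrixP => i j; rewrite mulmx_diag !mxE divrr.
have [v_unitmx _] := mulmx1_unit vW.
by rewrite -[W](mulKmx v_unitmx) vW mulmx1.
Qed.

Lemma quadform_diag_mx (R : comPzRingType) n (v : 'rV[R]_n) (u : 'cV[R]_n) :
  (u^T *m diag_mx v *m u) 0 0 = \sum_i v 0 i * u i 0 ^+ 2.
Proof.
rewrite mul_mx_diag mxE; apply: eq_bigr => i _.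
by rewrite !mxE mulrAC mulrC expr2.
Qed.

Section LogBound.
Variable R : realType.

Lemma subr_div_le_lnB {a b : R} : 0 < a -> 0 < b -> (b - a) / b <= ln b - ln a.
Proof.
move=> a_gt0 b_gt0; have := @le_ln1Dx R (a / b - 1).
rewrite [1 + _]addrC subrK ln_div ?posrE // ltrBrDl subrr divr_gt0 //.
by rewrite mulrBl divff ?gt_eqF //; lra.
Qed.

Lemma sum_incr_div_le_lnB (a : nat -> R) T : (forall t, 0 < a t) ->
  \sum_(1 <= t < T.+1) (a t - a t.-1) / a t <= ln (a T) - ln (a 0).
Proof.
move=> a_gt0; elim: T => [|T IH]; first by rewrite big_geq // subrr.
rewrite big_nat_recr //=.
by have := subr_div_le_lnB (a_gt0 T) (a_gt0 T.+1); lra.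
Qed.

End LogBound.

Section AdaGradDiagonal.
Variables (R : realType) (d : nat) (x : nat -> 'cV[R]_d) (r : R).

Lemma Amat_diagE i t :
  Amat r x t i i = 1 + r^-1 * \sum_(1 <= s < t.+1) x s i 0 ^+ 2.
Proof.
elim: t => [|t IH] /=; first by rewrite big_geq // mulr0 addr0 mxE eqxx.
rewrite mxE IH !mxE big_ord1 !mxE [in RHS]big_nat_recr //= mulrDr addrA.
by rewrite expr2.
Qed.

Lemma Amat_diag_succ i t :
  Amat r x t.+1 i i - Amat r x t i i = r^-1 * x t.+1 i 0 ^+ 2.
Proof. by rewrite !Amat_diagE big_nat_recr //= mulrDr; lra. Qed.

Hypothesis r_gt0 : 0 < r.

Lemma Amat_diag_gt0 i t : 0 < Amat r x t i i.
Proof.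
rewrite Amat_diagE ltr_wpDr // mulr_ge0 ?invr_ge0 ?(ltW r_gt0) //.
by apply: sumr_ge0 => s _; apply: sqr_ge0.
Qed.

Lemma Dmat_quadform t :
  ((x t)^T *m invmx (Dmat r x t) *m x t) 0 0
  = \sum_(i < d) (Amat r x t i i)^-1 * x t i 0 ^+ 2.
Proof.
rewrite /Dmat invmx_diag => [|i]; last by rewrite mxE unitfE gt_eqF ?Amat_diag_gt0.
by rewrite quadform_diag_mx; apply: eq_bigr => i _; rewrite !mxE.
Qed.

Lemma sum_coord_le_ln i T :
  \sum_(1 <= t < T.+1) (Amat r x t i i)^-1 * x t i 0 ^+ 2
  <= r * ln (Amat r x T i i).
Proof.
have -> : \sum_(1 <= t < T.+1) (Amat r x t i i)^-1 * x t i 0 ^+ 2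
        = r * \sum_(1 <= t < T.+1)
                (Amat r x t i i - Amat r x t.-1 i i) / Amat r x t i i.
  rewrite mulr_sumr big_nat_cond [RHS]big_nat_cond; apply: eq_bigr.
  case=> [|t] // _; rewrite succnK Amat_diag_succ !mulrA mulfV ?gt_eqF //.
  by rewrite mul1r [RHS]mulrC mulrA.
have := @sum_incr_div_le_lnB R (fun t => Amat r x t i i) T (Amat_diag_gt0 i).
by rewrite /= mxE eqxx ln1 subr0 ler_pM2l.
Qed.

End AdaGradDiagonal.

Theorem lemma4 (R : realType) (d T : nat) (x : nat -> 'cV[R]_d) (r : R)
  (hr : 0 < r) :
  \sum_(1 <= t < T.+1) ((x t)^T *m invmx (Dmat r x t) *m x t) ord0 ord0
  <= r * \sum_(i < d) ln (r^-1 * \sum_(1 <= t < T.+1) (x t i ord0) ^+ 2 + 1).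
Proof.
under eq_bigr => t _ do rewrite Dmat_quadform //.
rewrite exchange_big /= mulr_sumr; apply: ler_sum => i _.
by rewrite addrC -Amat_diagE sum_coord_le_ln.
Qed.
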